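(* Let $p\in\Delta_n$ be a probability distribution on $\{1,\dots,n\}$ and let $\rho>0$ satisfy $\|p\|_2\le\sqrt2\,\rho$. Let $Q$ be a positive integer such that $$3\left[2^{7/4}Q^{-1/2}\rho^{3/2}+2Q^{-1}\rho\right]\le\tfrac13\rho^2 .$$ Let $\xi,\xi'$ be the empirical distributions of two disjoint (consecutive) segments, of cardinality $Q$ each, of an i.i.d. sample drawn from $p$. Then $$\mathbb P\left\{\left|\xi^T\xi'-\|p\|_2^2\right|>\tfrac13\rho^2\right\}\le\tfrac13 .$$
   Context: $\Delta_n=\{r\in\mathbb{R}^n:r\ge0,\sum_ir_i=1\}$. The empirical distribution of a set of observations with values in $\{1,\dots,n\}$ is the vector whose $i$-th entry is the fraction of observations equal to $i$. *)

From HB Require Import structures.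
From mathcomp Require Import all_boot all_order all_algebra.
From mathcomp Require Import reals exp.
Set Implicit Arguments. Unset Strict Implicit. Unset Printing Implicit Defensive.
Import Order.TTheory GRing.Theory Num.Theory.
Local Open Scope ring_scope.

Definition in_simplex (R : realType) (n : nat) (p : 'I_n -> R) : Prop :=
  (forall i, 0 <= p i) /\ \sum_(i < n) p i = 1.

Definition norm2 (R : realType) (n : nat) (p : 'I_n -> R) : R :=
  Num.sqrt (\sum_(i < n) p i ^+ 2).

Definition empirical (R : realType) (n Q : nat) (x : {ffun 'I_Q -> 'I_n})
  : 'I_n -> R :=
  fun i => #|[set k | x k == i]|%:R / Q%:R.

Definition dotp (R : realType) (n : nat) (u v : 'I_n -> R) : R :=
  \sum_(i < n) u i * v i.

(* Probability, under an i.i.d. sample of size 2Q drawn from p, split into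
   the two consecutive segments x (first Q draws) and y (next Q draws),
   of the event E x y. *)
Definition iid_pair_prob (R : realType) (n Q : nat) (p : 'I_n -> R)
  (E : {ffun 'I_Q -> 'I_n} -> {ffun 'I_Q -> 'I_n} -> bool) : R :=
  \sum_(x : {ffun 'I_Q -> 'I_n}) \sum_(y : {ffun 'I_Q -> 'I_n} | E x y)
     (\prod_(k < Q) p (x k)) * (\prod_(k < Q) p (y k)).

(* The two empirical distributions xi, xi' are independent, with E xi = p and
   E[xi_i xi_j] = p_i p_j + (delta_ij p_i - p_i p_j) / Q.  Hence xi^T xi' has
   mean ||p||^2 and variance at most 2 sum_i p_i^3 / Q + ||p||^2 / Q^2, where
   sum_i p_i^3 <= ||p|| ||p||^2.  Writing a and b for the two terms of the
   hypothesis, this variance is at most (a^2 + b^2) / 2 <= rho^4 / 162, so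
   Chebyshev's inequality at level rho^2 / 3 bounds the probability by 1/18. *)

From HB Require Import structures.
From mathcomp Require Import all_boot all_order all_algebra.
From mathcomp Require Import reals exp.
From mathcomp Require Import ring lra.
Import Order.TTheory GRing.Theory Num.Theory.
Set Implicit Arguments. Unset Strict Implicit.
Local Open Scope ring_scope.

Section Expectation.
Variable R : comPzRingType.

Definition expect (T : finType) (w : T -> R) (F : T -> R) : R :=
  \sum_x w x * F x.

Definition prod_weight (T1 T2 : finType) (w1 : T1 -> R) (w2 : T2 -> R)
  (xy : T1 * T2) : R := w1 xy.1 * w2 xy.2.

Variables (T : finType) (w : T -> R).

Lemma eq_expect (F G : T -> R) : F =1 G -> expect w F = expect w G.
Proof. by move=> eqFG; apply: eq_bigr => x _; rewrite eqFG. Qed.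

Lemma expectD (F G : T -> R) :
  expect w (fun x => F x + G x) = expect w F + expect w G.
Proof.
by rewrite /expect -big_split; apply: eq_bigr => x _; rewrite mulrDr.
Qed.

Lemma expectZ (a : R) (F : T -> R) :
  expect w (fun x => a * F x) = a * expect w F.
Proof. by rewrite /expect mulr_sumr; apply: eq_bigr => x _; rewrite mulrCA. Qed.

Lemma expect_sum (I : finType) (F : I -> T -> R) :
  expect w (fun x => \sum_i F i x) = \sum_i expect w (F i).
Proof.
by rewrite /expect exchange_big; apply: eq_bigr => x _; rewrite mulr_sumr.
Qed.

Lemma expect_cst (a : R) : expect w (fun=> a) = (\sum_x w x) * a.
Proof. by rewrite /expect mulr_suml. Qed.

Lemma expect_delta (i : T) : expect w (fun x => (x == i)%:R) = w i.
Proof.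
rewrite /expect (bigD1 i) //= eqxx mulr1 big1 ?addr0 // => x /negbTE ->.
by rewrite mulr0.
Qed.

Lemma expect_prodM (T' : finType) (w' : T' -> R) (F : T -> R) (G : T' -> R) :
  expect (prod_weight w w') (fun xy => F xy.1 * G xy.2)
  = expect w F * expect w' G.
Proof.
rewrite /expect /prod_weight.
rewrite -(pair_bigA _ (fun x y => w x * w' y * (F x * G y))) mulr_suml.
apply: eq_bigr => x _.
by rewrite mulr_sumr; apply: eq_bigr => y _ /=; ring.
Qed.

Lemma expect_sqrB (X : T -> R) (s : R) : \sum_x w x = 1 ->
  expect w (fun x => (X x - s) ^+ 2)
  = expect w (fun x => X x ^+ 2) - 2 * s * expect w X + s ^+ 2.
Proof.
move=> w_sum1.
have sqrB x : (X x - s) ^+ 2 = X x ^+ 2 + - (2 * s) * X x + s ^+ 2 by ring.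
by rewrite (eq_expect sqrB) !expectD expectZ expect_cst w_sum1 mul1r mulNr.
Qed.

Lemma sum_prod_weight (T' : finType) (w' : T' -> R) :
  \sum_xy prod_weight w w' xy = (\sum_x w x) * (\sum_y w' y).
Proof.
rewrite /prod_weight -(pair_bigA _ (fun x y => w x * w' y)) mulr_suml.
by apply: eq_bigr => x _; rewrite mulr_sumr.
Qed.

End Expectation.

Lemma ler_expect (R : numDomainType) (T : finType) (w : T -> R) (F G : T -> R) :
  (forall x, 0 <= w x) -> (forall x, F x <= G x) -> expect w F <= expect w G.
Proof. by move=> w_ge0 leFG; apply: ler_sum => x _; rewrite ler_wpM2l. Qed.

Lemma chebyshev_expect (R : realFieldType) (T : finType) (w : T -> R)
    (d : T -> R) (t : R) :
  (forall x, 0 <= w x) -> 0 < t ->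
  expect w (fun x => (t < `|d x|)%R%:R)
  <= expect w (fun x => d x ^+ 2) / t ^+ 2.
Proof.
move=> w_ge0 t_gt0; rewrite mulrC -expectZ; apply: ler_expect => // x.
have t2_gt0 : 0 < t ^+ 2 by rewrite exprn_gt0.
have [lt_td|_] := boolP (t < `|d x|); last first.
  by rewrite mulr_ge0 ?invr_ge0 ?sqr_ge0 ?ltW.
rewrite mulrC ler_pdivlMr // mul1r -[d x ^+ 2]real_normK ?num_real // !expr2.
by rewrite ler_pM ?ltW.
Qed.

Section Sample.
Variables (R : comPzRingType) (n Q : nat) (p : 'I_n -> R).

Definition sample_weight (x : {ffun 'I_Q -> 'I_n}) : R := \prod_(k < Q) p (x k).

Lemma expect_sample_prod (h : 'I_Q -> 'I_n -> R) :
  expect sample_weight (fun x => \prod_l h l (x l)) = \prod_l expect p (h l).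
Proof.
by rewrite /expect bigA_distr_bigA; apply: eq_bigr => x _; rewrite -big_split.
Qed.

Hypothesis p_sum1 : \sum_j p j = 1.

Lemma expect_sample_prod_in (S : {set 'I_Q}) (h : 'I_Q -> 'I_n -> R) :
  expect sample_weight (fun x => \prod_(l in S) h l (x l))
  = \prod_(l in S) expect p (h l).
Proof.
rewrite big_mkcond (eq_expect _ (fun x => big_mkcond _ _)).
rewrite (expect_sample_prod (fun l j => if l \in S then h l j else 1)).
by apply: eq_bigr => l _; case: (l \in S); rewrite // expect_cst p_sum1 mulr1.
Qed.

Lemma expect_sample_cst (a : R) : expect sample_weight (fun=> a) = a.
Proof.
rewrite expect_cst -[RHS]mul1r; congr (_ * _).
transitivity
  (expect sample_weight (fun=> \prod_(l in set0 : {set 'I_Q}) (1 : R))).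
  by apply: eq_bigr => x _; rewrite big_set0 mulr1.
by rewrite (expect_sample_prod_in set0 (fun _ _ => 1)) big_set0.
Qed.

Lemma expect_sample_coord (k : 'I_Q) (g : 'I_n -> R) :
  expect sample_weight (fun x => g (x k)) = expect p g.
Proof.
rewrite -(big_set1 *%R k (fun=> expect p g)) -expect_sample_prod_in.
by apply: eq_expect => x; rewrite big_set1.
Qed.

Lemma expect_sample_coord2 (k k' : 'I_Q) (g h : 'I_n -> R) : k != k' ->
  expect sample_weight (fun x => g (x k) * h (x k'))
  = expect p g * expect p h.
Proof.
move=> neq_kk'.
pose gh l := if l == k then g else h.
have prod_set2 (F : 'I_Q -> R) :
    \prod_(l in [set k; k']) F l = F k * F k'.
  by rewrite big_setU1 ?big_set1 // in_set1.
have gh_k' : gh k' = h by rewrite /gh eq_sym (negbTE neq_kk').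
transitivity (expect p (gh k) * expect p (gh k')).
  rewrite -(prod_set2 (fun l => expect p (gh l))) -expect_sample_prod_in.
  by apply: eq_expect => x; rewrite prod_set2 gh_k' /gh eqxx.
by rewrite gh_k' /gh eqxx.
Qed.

End Sample.

Lemma sample_weight_ge0 (R : numDomainType) (n Q : nat) (p : 'I_n -> R)
    (x : {ffun 'I_Q -> 'I_n}) :
  (forall i, 0 <= p i) -> 0 <= sample_weight p x.
Proof. by move=> p_ge0; apply: prodr_ge0. Qed.

Lemma iid_pair_probE (R : realType) (n Q : nat) (p : 'I_n -> R)
    (E : {ffun 'I_Q -> 'I_n} -> {ffun 'I_Q -> 'I_n} -> bool) :
  iid_pair_prob p E
  = expect (prod_weight (sample_weight p) (sample_weight p))
      (fun xy => (E xy.1 xy.2)%:R).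
Proof.
rewrite /iid_pair_prob /expect /prod_weight.
rewrite -(pair_bigA _ (fun x y => sample_weight p x * sample_weight p y
                                  * (E x y)%:R)).
apply: eq_bigr => x _; rewrite big_mkcond; apply: eq_bigr => y _.
by case: (E x y); rewrite ?mulr1 ?mulr0.
Qed.

Section Empirical.
Variables (R : realType) (n Q : nat) (p : 'I_n -> R).
Hypotheses (p_sum1 : \sum_j p j = 1) (Q_gt0 : (0 < Q)%N).

Local Notation xi := (@empirical R n Q).
Local Notation sw := (@sample_weight R n Q p).

Lemma empiricalE x i : xi x i = Q%:R^-1 * \sum_k (x k == i)%:R.
Proof.
rewrite /empirical mulrC -sumr_const big_mkcond /=; congr (_ * _).
by apply: eq_bigr => k _; rewrite inE; case: (x k == i).
Qed.

Lemma expect_empirical i : expect sw (fun x => xi x i) = p i.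
Proof.
rewrite (eq_expect _ (fun x => empiricalE x i)) expectZ expect_sum.
under eq_bigr => k _ do
  rewrite (expect_sample_coord p_sum1 k (fun v => (v == i)%:R)) expect_delta.
rewrite sumr_const card_ord -[p i *+ Q]mulr_natl mulrA mulVf ?mul1r //.
by rewrite pnatr_eq0 -lt0n.
Qed.

Lemma expect_empirical2 i j :
  expect sw (fun x => xi x i * xi x j)
  = p i * p j + Q%:R^-1 * ((i == j)%:R * p i - p i * p j).
Proof.
set A := (i == j)%:R * p i; set B := p i * p j.
have pair_term (k k' : 'I_Q) :
    expect sw (fun x => (x k == i)%:R * (x k' == j)%:R)
    = B + (k' == k)%:R * (A - B).
  have [->|neq_k'k] := eqVneq k' k.
    rewrite (expect_sample_coord p_sum1 k (fun v => (v == i)%:R * (v == j)%:R)).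
    rewrite mulr1n mul1r addrC subrK /A -(expect_delta p i) -expectZ.
    apply: eq_expect => v.
    by case: eqVneq => [->|_]; rewrite mulrC //= !mulr0n !mulr0.
  rewrite eq_sym in neq_k'k.
  rewrite (expect_sample_coord2 p_sum1 (fun v => (v == i)%:R)
             (fun v => (v == j)%:R) neq_k'k).
  by rewrite !expect_delta mulr0n mul0r addr0.
have sum_pair_term (k : 'I_Q) :
    \sum_k' (B + (k' == k)%:R * (A - B)) = Q%:R * B + (A - B).
  rewrite big_split sumr_const card_ord mulr_natl (bigD1 k) //= eqxx mul1r.
  by rewrite big1 ?addr0 // => k' /negbTE ->; rewrite mul0r.
under eq_expect => x do rewrite !empiricalE mulrACA big_distrlr.
rewrite expectZ expect_sum.
under eq_bigr => k _ do rewrite expect_sum.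
under eq_bigr => k _ do under eq_bigr => k' _ do rewrite pair_term.
under eq_bigr => k _ do rewrite sum_pair_term.
rewrite sumr_const card_ord -mulr_natl.
have Q_neq0 : Q%:R != 0 :> R by rewrite pnatr_eq0 -lt0n.
by field.
Qed.

Local Notation pw := (prod_weight sw sw).

Lemma expect_dotp_empirical :
  expect pw (fun xy => dotp (xi xy.1) (xi xy.2)) = \sum_i p i ^+ 2.
Proof.
rewrite /dotp expect_sum; apply: eq_bigr => i _.
rewrite (expect_prodM _ _ (fun x => xi x i) (fun y => xi y i)).
by rewrite expect_empirical.
Qed.

Lemma expect_dotp_empirical_sq :
  expect pw (fun xy => dotp (xi xy.1) (xi xy.2) ^+ 2)
  = \sum_i \sum_j (p i * p j + Q%:R^-1 * ((i == j)%:R * p i - p i * p j)) ^+ 2.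
Proof.
have dotp_sq (u v : 'I_n -> R) :
    dotp u v ^+ 2 = \sum_i \sum_j (u i * u j) * (v i * v j).
  rewrite /dotp expr2 big_distrlr; apply: eq_bigr => i _.
  by apply: eq_bigr => j _; rewrite mulrACA.
rewrite (eq_expect _ (fun xy => dotp_sq _ _)) expect_sum; apply: eq_bigr => i _.
rewrite expect_sum; apply: eq_bigr => j _.
rewrite (expect_prodM _ _ (fun x => xi x i * xi x j)
                         (fun y => xi y i * xi y j)).
by rewrite expect_empirical2 expr2.
Qed.

Lemma expect_dotp_empirical_dev :
  expect pw (fun xy => (dotp (xi xy.1) (xi xy.2) - \sum_i p i ^+ 2) ^+ 2)
  = \sum_i \sum_j (p i * p j + Q%:R^-1 * ((i == j)%:R * p i - p i * p j)) ^+ 2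
    - (\sum_i p i ^+ 2) ^+ 2.
Proof.
have sample_sum1 : \sum_x sw x = 1.
  by rewrite -[LHS]mulr1 -expect_cst (expect_sample_cst Q p_sum1).
rewrite expect_sqrB ?sum_prod_weight ?sample_sum1 ?mulr1 //.
by rewrite expect_dotp_empirical_sq expect_dotp_empirical; ring.
Qed.

End Empirical.

Lemma sum_sq_moment (R : comPzRingType) (n : nat) (p : 'I_n -> R) (c : R) :
  \sum_i \sum_j (p i * p j + c * ((i == j)%:R * p i - p i * p j)) ^+ 2
  = (1 - c) ^+ 2 * (\sum_i p i ^+ 2) ^+ 2 + 2 * (1 - c) * c * (\sum_i p i ^+ 3)
    + c ^+ 2 * (\sum_i p i ^+ 2).
Proof.
set s2 := \sum_i p i ^+ 2.
have row i : \sum_j (p i * p j + c * ((i == j)%:R * p i - p i * p j)) ^+ 2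
    = (1 - c) ^+ 2 * s2 * p i ^+ 2 + 2 * (1 - c) * c * p i ^+ 3
      + c ^+ 2 * p i ^+ 2.
  rewrite (bigD1 i) //= eqxx mulr1n.
  rewrite (eq_bigr (fun j => (1 - c) ^+ 2 * p i ^+ 2 * p j ^+ 2)); last first.
    by move=> j /negbTE; rewrite eq_sym => ->; rewrite mulr0n; ring.
  have s2E : s2 = p i ^+ 2 + \sum_(j | j != i) p j ^+ 2.
    by rewrite /s2 (bigD1 i).
  by rewrite -mulr_sumr s2E; ring.
by rewrite (eq_bigr _ (fun i _ => row i)) !big_split /= -!mulr_sumr -/s2; ring.
Qed.

Lemma sum_sq_moment_le (R : realFieldType) (n : nat) (p : 'I_n -> R) (c : R) :
  (forall i, 0 <= p i) -> 0 <= c -> c <= 1 ->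
  \sum_i \sum_j (p i * p j + c * ((i == j)%:R * p i - p i * p j)) ^+ 2
    - (\sum_i p i ^+ 2) ^+ 2
  <= 2 * c * (\sum_i p i ^+ 3) + c ^+ 2 * (\sum_i p i ^+ 2).
Proof.
move=> p_ge0 c_ge0 c_le1.
set s2 := \sum_i p i ^+ 2; set s3 := \sum_i p i ^+ 3.
have s3_ge0 : 0 <= s3 by apply: sumr_ge0 => i _; rewrite exprn_ge0.
rewrite sum_sq_moment -/s2 -/s3 -subr_ge0.
have -> : 2 * c * s3 + c ^+ 2 * s2
          - ((1 - c) ^+ 2 * s2 ^+ 2 + 2 * (1 - c) * c * s3 + c ^+ 2 * s2
             - s2 ^+ 2)
        = c * (2 - c) * s2 ^+ 2 + 2 * c ^+ 2 * s3 by ring.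
apply: addr_ge0; apply: mulr_ge0; rewrite ?sqr_ge0 //.
  by rewrite mulr_ge0 // subr_ge0 (le_trans c_le1) // ler1n.
by rewrite mulr_ge0 ?sqr_ge0.
Qed.

Lemma sum_cube_le_norm2 (R : realType) (n : nat) (p : 'I_n -> R) :
  (forall i, 0 <= p i) -> \sum_i p i ^+ 3 <= norm2 p * \sum_i p i ^+ 2.
Proof.
move=> p_ge0; rewrite mulr_sumr; apply: ler_sum => i _.
have le_p_norm2 : p i <= norm2 p.
  rewrite /norm2 -(ger0_norm (p_ge0 i)) -sqrtr_sqr ler_sqrt; last first.
    by apply: sumr_ge0 => j _; rewrite sqr_ge0.
  by rewrite (bigD1 i) //= lerDl sumr_ge0 // => j _; rewrite sqr_ge0.
by rewrite exprS mulrC [_ * p i ^+ 2]mulrC ler_wpM2l ?sqr_ge0.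
Qed.

Lemma sqr_powR_term (R : realType) (x rho : R) : 0 <= x -> 0 <= rho ->
  (2 `^ (7 / 4) * x `^ (- (1 / 2)) * rho `^ (3 / 2)) ^+ 2
  = 8 * Num.sqrt 2 * rho ^+ 3 / x.
Proof.
move=> x_ge0 rho_ge0.
have sqr_powR (a r : R) : 0 <= a -> (a `^ r) ^+ 2 = a `^ (r * 2).
  by move=> a_ge0; rewrite -powR_mulrn ?powR_ge0 // -powRrM.
rewrite !exprMn !sqr_powR ?ler0n //.
rewrite (_ : 7 / 4 * 2 = 3%:R + 2^-1 :> R); last by field.
rewrite powRD ?pnatr_eq0 ?implybT // powR_mulrn // powR12_sqrt //.
rewrite (_ : - (1 / 2) * 2 = -1 :> R); last by field.
rewrite powR_inv1 // (_ : 3 / 2 * 2 = 3%:R :> R); last by field.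
by rewrite powR_mulrn //; ring.
Qed.

Lemma variance_bound_small (R : realType) (x rho s2 s3 : R) :
  0 <= x -> 0 < rho -> s2 <= 2 * rho ^+ 2 -> s3 <= 2 * Num.sqrt 2 * rho ^+ 3 ->
  3 * (2 `^ (7 / 4) * x `^ (- (1 / 2)) * rho `^ (3 / 2) + 2 * x^-1 * rho)
    <= rho ^+ 2 / 3 ->
  2 * x^-1 * s3 + x^-1 ^+ 2 * s2 <= (rho ^+ 2 / 3) ^+ 2 / 3.
Proof.
move=> x_ge0 rho_gt0 s2_le s3_le.
have a2E := sqr_powR_term x_ge0 (ltW rho_gt0).
set a := 2 `^ _ * _ * _ in a2E *; set c := x^-1 in a2E *.
set b := 2 * c * rho => budget.
have c_ge0 : 0 <= c by rewrite invr_ge0.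
have a_ge0 : 0 <= a by rewrite !mulr_ge0 ?powR_ge0.
have b_ge0 : 0 <= b by rewrite !mulr_ge0 // ltW.
have sqrt2_ge0 : 0 <= Num.sqrt 2 :> R by rewrite sqrtr_ge0.
have le_a2 : 2 * c * s3 <= a ^+ 2 / 2.
  rewrite a2E (_ : _ / 2 = 2 * c * (2 * Num.sqrt 2 * rho ^+ 3)); last by field.
  by rewrite ler_wpM2l // mulr_ge0.
have le_b2 : c ^+ 2 * s2 <= b ^+ 2 / 2.
  rewrite (_ : _ / 2 = c ^+ 2 * (2 * rho ^+ 2)); last by rewrite /b; field.
  by rewrite ler_wpM2l // sqr_ge0.
have ab_le : a + b <= rho ^+ 2 / 9 by lra.
(* [2 c s3 + c^2 s2 <= (a^2 + b^2) / 2 <= (a + b)^2 / 2 <= rho^4 / 162] *)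
nra.
Qed.

Unset Implicit Arguments. Set Strict Implicit.

Theorem lemma1 (R : realType) (n : nat) (p : 'I_n -> R) (rho : R) (Q : nat) :
  in_simplex p ->
  0 < rho ->
  norm2 p <= Num.sqrt 2 * rho ->
  (0 < Q)%N ->
  3 * (2 `^ (7 / 4) * Q%:R `^ (- (1 / 2)) * rho `^ (3 / 2)
       + 2 * Q%:R^-1 * rho) <= rho ^+ 2 / 3 ->
  iid_pair_prob p
    (fun x y => `|dotp (@empirical R n Q x) (@empirical R n Q y) - norm2 p ^+ 2|
                  > rho ^+ 2 / 3)
  <= 1 / 3.
Proof.
move=> [p_ge0 p_sum1] rho_gt0 norm_le Q_gt0 budget.
have norm2_sq : norm2 p ^+ 2 = \sum_i p i ^+ 2.
  by rewrite sqr_sqrtr // sumr_ge0 // => i _; rewrite sqr_ge0.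
have norm2_ge0 : 0 <= norm2 p by rewrite sqrtr_ge0.
have sqrt2_ge0 : 0 <= Num.sqrt 2 :> R by rewrite sqrtr_ge0.
have s2_le : \sum_i p i ^+ 2 <= 2 * rho ^+ 2.
  have : norm2 p ^+ 2 <= (Num.sqrt 2 * rho) ^+ 2 by rewrite !expr2 ler_pM.
  by rewrite norm2_sq exprMn sqr_sqrtr ?ler0n.
have s3_le : \sum_i p i ^+ 3 <= 2 * Num.sqrt 2 * rho ^+ 3.
  apply: le_trans (sum_cube_le_norm2 p_ge0) _.
  rewrite (_ : 2 * _ * _ = Num.sqrt 2 * rho * (2 * rho ^+ 2)); last by ring.
  by rewrite ler_pM ?sumr_ge0 // => i _; rewrite sqr_ge0.
have t_gt0 : 0 < rho ^+ 2 / 3 by rewrite divr_gt0 ?exprn_gt0.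
rewrite iid_pair_probE norm2_sq.
apply: le_trans (chebyshev_expect _ _ t_gt0) _ => [xy|].
  by rewrite mulr_ge0 ?sample_weight_ge0.
rewrite expect_dotp_empirical_dev // ler_pdivrMr ?exprn_gt0 //.
have Q_ge0 : 0 <= Q%:R :> R by rewrite ler0n.
apply: le_trans (sum_sq_moment_le p_ge0 _ _) _.
- by rewrite invr_ge0.
- by rewrite invf_le1 ?ltr0n ?ler1n.
apply: le_trans (variance_bound_small Q_ge0 rho_gt0 s2_le s3_le budget) _.
lra.
Qed.
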